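(* Let $f_1:[0,\infty)\to[0,\infty)$ be defined by $f_1(0)=1$, $f_1(1)=0$, and $f_1(t)=t$ for $t\notin\{0,1\}$, and let $\mathbf{A}_1=\{f_1,\mathrm{id}\}$ where $\mathrm{id}$ is the identity map of $[0,\infty)$. Then $\mathbf{A}_1$ is a submonoid of $(\mathbf{F},\circ)$, but there is no subclass $\mathbf{X}$ of the class of all metric spaces with $\mathbf{P}_{\mathbf{X}}=\mathbf{A}_1$.
   Context: All metric spaces are assumed to have nonempty underlying sets. $\mathbf{F}$ is the set of all functions $f:[0,\infty)\to[0,\infty)$, a monoid under composition with identity $\mathrm{id}$. A submonoid is a subset closed under composition and containing $\mathrm{id}$. For a class $\mathbf{X}$ of metric spaces, $\mathbf{P}_{\mathbf{X}}$ denotes the set of all $f\in\mathbf{F}$ such that for every metric space $(X,d)$, if $(X,d)\in\mathbf{X}$ then $(X,f\circ d)\in\mathbf{X}$ (where $f\circ d(x,y)=f(d(x,y))$; membership requires $f\circ d$ to be a metric). *)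

From Stdlib Require Import Reals Lra.
Open Scope R_scope.

Definition nnR : Type := {x : R | 0 <= x}.
Definition val (x : nnR) : R := proj1_sig x.

Definition FF : Type := nnR -> nnR.
Definition idF : FF := fun t => t.
Definition compF (f g : FF) : FF := fun t => f (g t).

Definition submonoid (A : FF -> Prop) : Prop :=
  A idF /\ forall f g, A f -> A g -> A (compF f g).

Definition is_metric (T : Type) (d : T -> T -> nnR) : Prop :=
  inhabited T /\
  (forall x y, val (d x y) = 0 <-> x = y) /\
  (forall x y, d x y = d y x) /\
  (forall x y z, val (d x z) <= val (d x y) + val (d y z)).

(* A class of metric spaces: a predicate on pairs (T, d), all of whose
   members are metric spaces. *)
Definition MClass : Type := forall T : Type, (T -> T -> nnR) -> Prop.

Definition class_of_metric_spaces (X : MClass) : Prop :=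
  forall T d, X T d -> is_metric T d.

Definition PX (X : MClass) (f : FF) : Prop :=
  forall T (d : T -> T -> nnR), X T d -> X T (fun x y => f (d x y)).

Definition f1R (t : R) : R :=
  if Req_EM_T t 0 then 1 else if Req_EM_T t 1 then 0 else t.

Lemma f1R_nonneg (t : R) : 0 <= t -> 0 <= f1R t.
Proof.
  intro H; unfold f1R.
  destruct (Req_EM_T t 0); [lra|]. destruct (Req_EM_T t 1); lra.
Qed.

Definition f_1 : FF := fun t => exist _ (f1R (val t)) (f1R_nonneg (val t) (proj2_sig t)).

Definition A_1 (f : FF) : Prop := f = f_1 \/ f = idF.

From Stdlib Require Import Reals Lra ProofIrrelevance FunctionalExtensionality.
Open Scope R_scope.

(* f_1 is an involution, so A_1 = {id, f_1} is closed under composition.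
   Since f_1 sends 0 to 1, f_1 o d is never a metric; hence f_1 in P_X forces
   X to be empty, and then P_X is all of F, which is much larger than A_1. *)

Lemma f1R_0 : f1R 0 = 1.
Proof. unfold f1R; destruct (Req_EM_T 0 0); lra. Qed.

Lemma f1R_1 : f1R 1 = 0.
Proof. unfold f1R; destruct (Req_EM_T 1 0); [lra|]; destruct (Req_EM_T 1 1); lra. Qed.

Lemma f1R_involutive (t : R) : f1R (f1R t) = t.
Proof.
  unfold f1R at 2; destruct (Req_EM_T t 0) as [->|Ht0]; [apply f1R_1|].
  destruct (Req_EM_T t 1) as [->|Ht1]; [apply f1R_0|].
  unfold f1R; destruct (Req_EM_T t 0); [lra|]; destruct (Req_EM_T t 1); lra.
Qed.

Lemma val_inj (a b : nnR) : val a = val b -> a = b.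
Proof.
  destruct a as [a Ha], b as [b Hb]; unfold val; simpl; intros ->.
  f_equal; apply proof_irrelevance.
Qed.

Lemma f_1_involutive : compF f_1 f_1 = idF.
Proof.
  apply functional_extensionality; intro t; apply val_inj.
  apply f1R_involutive.
Qed.

Lemma A_1_submonoid : submonoid A_1.
Proof.
  split; [now right|].
  intros f g [-> | ->] [-> | ->].
  - right; apply f_1_involutive.
  - now left.
  - now left.
  - now right.
Qed.

Definition zeroN : nnR := exist _ 0 (Rle_refl 0).
Definition oneN : nnR := exist _ 1 Rle_0_1.

Lemma metric_dist_self (T : Type) (d : T -> T -> nnR) (x : T) :
  is_metric T d -> d x x = zeroN.
Proof. intros [_ [Hd _]]; apply val_inj, Hd; reflexivity. Qed.

Lemma PX_class_empty (X : MClass) (f : FF) :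
  class_of_metric_spaces X -> val (f zeroN) <> 0 -> PX X f ->
  forall T d, ~ X T d.
Proof.
  intros HX Hf0 Hf T d Hd.
  destruct (HX _ _ (Hf T d Hd)) as [[x] [Hfd _]].
  apply Hf0; rewrite <- (metric_dist_self T d x (HX _ _ Hd)).
  now apply Hfd.
Qed.

Lemma PX_of_empty (X : MClass) (f : FF) : (forall T d, ~ X T d) -> PX X f.
Proof. intros Hempty T d Hd; exfalso; exact (Hempty T d Hd). Qed.

Lemma not_A_1_const_zero : ~ A_1 (fun _ => zeroN).
Proof.
  intros [H | H].
  - apply (f_equal (fun f => val (f zeroN))) in H.
    unfold f_1, val in H; simpl in H; rewrite f1R_0 in H; lra.
  - apply (f_equal (fun f => val (f oneN))) in H.
    unfold idF, val in H; simpl in H; lra.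
Qed.

Theorem mainTheorem7 :
  submonoid A_1 /\
  ~ (exists X : MClass, class_of_metric_spaces X /\ forall f : FF, PX X f <-> A_1 f).
Proof.
  split; [exact A_1_submonoid|].
  intros [X [HX HPX]].
  assert (Hempty : forall T d, ~ X T d).
  { apply (PX_class_empty X f_1 HX).
    - unfold f_1, val; simpl; rewrite f1R_0; lra.
    - apply HPX; now left. }
  apply not_A_1_const_zero, HPX, PX_of_empty, Hempty.
Qed.
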